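(* Let $q$ be a prime power and let $\ell_1,\ell_2,\ell_3,\ell_4$ be lines in $\mathrm{PG}(4,q)$ such that (L1) any three of them span $\mathrm{PG}(4,q)$, and (L2) any two of them are skew. Then at most one of the four lines can be obtained by (exact) $(3,1)$-repair from the remaining three lines; here a line $\ell$ is obtained by $(3,1)$-repair from lines $a,b,c$ if there are points $P_a\in a$, $P_b\in b$, $P_c\in c$ with $\ell\subseteq\langle P_a,P_b,P_c\rangle$. *)

(* PG(4,q) = projective geometry of F^5, F a finite field
   with q = #|F| elements (every prime power q arises this way).
   A projective subspace is modelled by the row space of a matrix over F;
   a line of PG(4,q) is the row space of a rank-2 matrix in 'M[F]_(2,5);
   a point is the row space of a nonzero row vector in 'rV[F]_5. *)
From HB Require Import structures.
From mathcomp Require Import all_boot all_order all_algebra.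
Set Implicit Arguments. Unset Strict Implicit. Unset Printing Implicit Defensive.
Import GRing.Theory.
Local Open Scope ring_scope.

Section PG4.
Variable F : finFieldType.

Definition is_line (L : 'M[F]_(2,5)) : bool := \rank L == 2%N.

Definition repair31 (l a b c : 'M[F]_(2,5)) : Prop :=
  exists (pa pb pc : 'rV[F]_5),
    [/\ [&& pa != 0, pb != 0 & pc != 0],
        [&& (pa <= a)%MS, (pb <= b)%MS & (pc <= c)%MS] &
        (l <= col_mx (col_mx pa pb) pc)%MS].

Definition repaired_from_rest (ls : 'I_4 -> 'M[F]_(2,5)) (i : 'I_4) : Prop :=
  exists j k m : 'I_4,
    [/\ uniq [:: i; j; k; m] & repair31 (ls i) (ls j) (ls k) (ls m)].

Definition any_three_span (ls : 'I_4 -> 'M[F]_(2,5)) : Prop :=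
  forall i j k : 'I_4, uniq [:: i; j; k] ->
    \rank (col_mx (col_mx (ls i) (ls j)) (ls k)) = 5%N.

Definition pairwise_skew (ls : 'I_4 -> 'M[F]_(2,5)) : Prop :=
  forall i j : 'I_4, i != j -> \rank (ls i :&: ls j)%MS = 0%N.

End PG4.

(* Suppose lines A and B are each repaired from the other together with C and D:
   A lies in the plane <P_B, P_C, P_D> and B in <Q_A, Q_C, Q_D>.  As A and B are
   skew, both planes lie in the solid A + B, which by (L1) meets C and D in single
   points; hence Q_C = P_C and Q_D = P_D.  Let m be the line P_C P_D.  Then A lies
   in the plane spanned by m and the point P_B of B, which forces m to miss B, while
   B lies in the plane spanned by m and Q_A, which forces B to meet m. *)

From HB Require Import structures.
From mathcomp Require Import all_boot all_order all_algebra zify.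
Set Implicit Arguments. Unset Strict Implicit. Unset Printing Implicit Defensive.
Import GRing.Theory.
Local Open Scope ring_scope.

Section RowSpaces.
Variables (F : fieldType) (n : nat).

Lemma sub_mxrank_ge m1 m2 (A : 'M[F]_(m1, n)) (B : 'M[F]_(m2, n)) :
  (A <= B)%MS -> (\rank B <= \rank A)%N -> (B <= A)%MS.
Proof. by move=> sAB leBA; rewrite -(mxrank_leqif_sup sAB) eqn_leq leBA mxrankS. Qed.

Lemma eqmx_col_mx3 m1 m2 m3
    (A : 'M[F]_(m1, n)) (B : 'M[F]_(m2, n)) (C : 'M[F]_(m3, n)) :
  (col_mx (col_mx A B) C :=: A + B + C)%MS.
Proof.
apply: eqmx_trans (eqmx_sym (addsmxE _ _)) _.
exact: adds_eqmx (eqmx_sym (addsmxE _ _)) (eqmx_refl C).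
Qed.

Lemma mxrank_adds_le m1 m2 (A : 'M[F]_(m1, n)) (B : 'M[F]_(m2, n)) :
  (\rank (A + B) <= \rank A + \rank B)%N.
Proof. by have [] := mxrank_adds_leqif A B. Qed.

Lemma mxrank_le_adds_cap m1 m2 m3
    (A : 'M[F]_(m1, n)) (B : 'M[F]_(m2, n)) (C : 'M[F]_(m3, n)) :
  (A <= B + C)%MS -> (\rank A <= \rank B + \rank (A :&: C))%N.
Proof.
move=> sA; have := mxrank_sum_cap A C; have := mxrank_adds_le B C.
have : (\rank (A + C) <= \rank (B + C))%N by rewrite mxrankS // addsmx_sub sA addsmxSr.
lia.
Qed.

Lemma rV_sub_rank_le1 m (A : 'M[F]_(m, n)) (x y : 'rV[F]_n) :
  x != 0 -> (x <= A)%MS -> (y <= A)%MS -> (\rank A <= 1)%N -> (y <= x)%MS.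
Proof.
move=> nz_x xA yA rA; apply: submx_trans yA _.
by apply: sub_mxrank_ge xA _; rewrite rank_rV nz_x.
Qed.

Lemma mxrank_adds_rV (x y : 'rV[F]_n) : (\rank (x + y) <= 2)%N.
Proof. by have := mxrank_adds_le x y; have := rank_leq_row x; have := rank_leq_row y; lia. Qed.

Lemma point_line_join_sub_skew_join m
    (A B : 'M[F]_(2, n)) (x : 'rV[F]_n) (L : 'M[F]_(m, n)) :
  \rank A = 2%N -> \rank (A :&: B) = 0%N -> (\rank L <= 2)%N ->
  x != 0 -> (x <= B)%MS -> (A <= x + L)%MS -> (x + L <= A + B)%MS.
Proof.
move=> rA AB0 rL nz_x xB sA.
have sAxP : (A + x <= x + L)%MS by rewrite addsmx_sub sA addsmxSl.
have Ax0 : \rank (A :&: x) = 0%N.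
  by have := mxrankS (capmxS (submx_refl A) xB); rewrite AB0 leqn0 => /eqP.
have rAx : \rank (A + x) = 3%N.
  by have := mxrank_sum_cap A x; rewrite rA Ax0 rank_rV nz_x; lia.
have rP : (\rank (x + L) <= 3)%N.
  by have := mxrank_adds_le x L; have := rank_leq_row x; lia.
apply: submx_trans (sub_mxrank_ge sAxP _) _; first by rewrite rAx.
exact: addsmxS.
Qed.

Section SkewLines.
Variables (A B : 'M[F]_(2, n)).
Hypotheses (rA : \rank A = 2%N) (rB : \rank B = 2%N) (AB0 : \rank (A :&: B) = 0%N).

Lemma mxrank_skew_join : \rank (A + B) = 4%N.
Proof. by have := mxrank_sum_cap A B; rewrite rA rB AB0; lia. Qed.

Lemma skew_join_cap_rank_le1 (C : 'M[F]_(2, n)) :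
  \rank (A + B + C) = 5%N -> (\rank ((A + B) :&: C) <= 1)%N.
Proof.
have := mxrank_sum_cap (A + B)%MS C; have := rank_leq_row C.
by rewrite mxrank_skew_join; lia.
Qed.

Lemma skew_point_line_join_cap0 m (L : 'M[F]_(m, n)) (x : 'rV[F]_n) :
  (\rank L <= 2)%N -> (x <= B)%MS -> (A <= x + L)%MS -> \rank (B :&: L) = 0%N.
Proof.
move=> rL xB sA; set P := (x + L)%MS.
have rP : (\rank P <= 3)%N.
  by rewrite /P; have := mxrank_adds_le x L; have := rank_leq_row x; lia.
have rBP : (\rank (B :&: P) <= 1)%N.
  have : (A + B <= B + P)%MS by rewrite (addsmxC B) addsmxS.
  move/mxrankS; have := mxrank_sum_cap B P; rewrite mxrank_skew_join rB; lia.
apply/eqP; rewrite -leqn0 leqNgt; apply/negP => BL_gt0.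
have sBLP : (B :&: L <= B :&: P)%MS by rewrite capmxS ?addsmxSr.
have xL : (x <= L)%MS.
  have xBP : (x <= B :&: P)%MS by rewrite sub_capmx addsmxSl xB.
  apply: submx_trans xBP (submx_trans (sub_mxrank_ge sBLP _) (capmxSr _ _)); lia.
have AL : (A <= L)%MS by rewrite (submx_trans sA) // addsmx_sub xL submx_refl.
have LA : (L <= A)%MS by apply: sub_mxrank_ge AL _; rewrite rA.
by have := mxrankS (capmxS (submx_refl B) LA); rewrite (capmxC B A) AB0; lia.
Qed.

End SkewLines.

Lemma no_mutual_point_repair
    (A B C D : 'M[F]_(2, n)) (xb xc xd ya yc yd : 'rV[F]_n) :
  \rank A = 2%N -> \rank B = 2%N -> \rank (A :&: B) = 0%N ->
  \rank (A + B + C) = 5%N -> \rank (A + B + D) = 5%N ->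
  [&& xb != 0, xc != 0 & xd != 0] -> ya != 0 ->
  [&& xb <= B, xc <= C & xd <= D]%MS -> [&& ya <= A, yc <= C & yd <= D]%MS ->
  (A <= xb + xc + xd)%MS -> ~ (B <= ya + yc + yd)%MS.
Proof.
move=> rA rB AB0 rABC rABD /and3P[nz_xb nz_xc nz_xd] nz_ya.
move=> /and3P[xbB xcC xdD] /and3P[yaA ycC ydD] sA sB.
rewrite -addsmxA in sA; rewrite -addsmxA in sB.
set L := (xc + xd)%MS in sA; set M := (yc + yd)%MS in sB.
have LAB : (L <= A + B)%MS.
  apply: submx_trans (addsmxSr xb L) _.
  exact: point_line_join_sub_skew_join rA AB0 (mxrank_adds_rV xc xd) nz_xb xbB sA.
have MAB : (M <= A + B)%MS.
  apply: submx_trans (addsmxSr ya M) _; rewrite (addsmxC A B).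
  apply: point_line_join_sub_skew_join rB _ (mxrank_adds_rV yc yd) nz_ya yaA sB.
  by rewrite capmxC.
have ML : (M <= L)%MS.
  have ycxc : (yc <= xc)%MS.
    apply: rV_sub_rank_le1 nz_xc _ _ (skew_join_cap_rank_le1 rA rB AB0 rABC).
      by rewrite sub_capmx xcC (submx_trans (addsmxSl xc xd)).
    by rewrite sub_capmx ycC (submx_trans (addsmxSl yc yd)).
  have ydxd : (yd <= xd)%MS.
    apply: rV_sub_rank_le1 nz_xd _ _ (skew_join_cap_rank_le1 rA rB AB0 rABD).
      by rewrite sub_capmx xdD (submx_trans (addsmxSr xc xd)).
    by rewrite sub_capmx ydD (submx_trans (addsmxSr yc yd)).
  exact: addsmxS.
have BL : (B <= ya + L)%MS := submx_trans sB (addsmxS (submx_refl ya) ML).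
have := mxrank_le_adds_cap BL; have := rank_leq_row ya.
have BL0 := skew_point_line_join_cap0 rA rB AB0 (mxrank_adds_rV xc xd) xbB sA.
by rewrite BL0 rB addn0 ltnNge => ->.
Qed.

End RowSpaces.

Section Repair.
Variable F : finFieldType.
Implicit Types l a b c : 'M[F]_(2, 5).

Lemma repair31E l a b c : repair31 l a b c <->
  exists pa pb pc : 'rV[F]_5, [/\ [&& pa != 0, pb != 0 & pc != 0],
    [&& pa <= a, pb <= b & pc <= c]%MS & (l <= pa + pb + pc)%MS].
Proof.
by split=> -[pa [pb [pc [nz sub sl]]]]; exists pa, pb, pc; rewrite eqmx_col_mx3 in sl *.
Qed.

Lemma repair31_swapl l a b c : repair31 l a b c -> repair31 l b a c.
Proof.
move/repair31E=> [pa [pb [pc [/and3P[? ? ?] /and3P[? ? ?] sl]]]]; apply/repair31E.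
by exists pb, pa, pc; rewrite (addsmxC pb) sl; split=> //; apply/and3P.
Qed.

Lemma repair31_swapr l a b c : repair31 l a b c -> repair31 l a c b.
Proof.
move/repair31E=> [pa [pb [pc [/and3P[? ? ?] /and3P[? ? ?] sl]]]]; apply/repair31E.
by exists pa, pc, pb; rewrite -addsmxA (addsmxC pc) addsmxA sl; split=> //; apply/and3P.
Qed.

Lemma no_mutual_repair31 (A B C D : 'M[F]_(2, 5)) :
  \rank A = 2%N -> \rank B = 2%N -> \rank (A :&: B) = 0%N ->
  \rank (col_mx (col_mx A B) C) = 5%N -> \rank (col_mx (col_mx A B) D) = 5%N ->
  repair31 A B C D -> ~ repair31 B A C D.
Proof.
rewrite !eqmx_col_mx3 => rA rB AB0 rABC rABD /repair31E[xb [xc [xd [nz_x sub_x sA]]]].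
move=> /repair31E[ya [yc [yd [/and3P[nz_ya _ _] sub_y sB]]]].
exact: no_mutual_point_repair rA rB AB0 rABC rABD nz_x nz_ya sub_x sub_y sA sB.
Qed.

End Repair.

Lemma mem_uniq_ord4 (i j k m x : 'I_4) : uniq [:: i; j; k; m] -> x \in [:: i; j; k; m].
Proof.
move=> u; apply/negPn/negP => x_out.
have := max_card (mem [:: x; i; j; k; m]).
by rewrite card_ord (card_uniqP _) //= x_out.
Qed.

Section Family.
Variables (F : finFieldType) (ls : 'I_4 -> 'M[F]_(2, 5)).

Lemma repaired_from_rest_with (i j : 'I_4) : i != j -> repaired_from_rest ls i ->
  exists k m, uniq [:: i; j; k; m] /\ repair31 (ls i) (ls j) (ls k) (ls m).
Proof.
move=> ij [a [b [c [u r]]]].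
have : [|| j == a, j == b | j == c].
  by have := mem_uniq_ord4 j u; rewrite !inE eq_sym (negbTE ij).
case/or3P=> /eqP->.
- by exists b, c.
- exists a, c; split; last exact: repair31_swapl.
  rewrite (perm_uniq (_ : perm_eq _ [:: i; a; b; c])) //.
  by rewrite perm_cons (perm_catCA [:: b] [:: a]).
- exists a, b; split; last exact: repair31_swapl (repair31_swapr r).
  rewrite (perm_uniq (_ : perm_eq _ [:: i; a; b; c])) //.
  by rewrite perm_cons (perm_catCA [:: c] [:: a; b] [::]).
Qed.

Lemma repaired_from_rest_pair (i j : 'I_4) : i != j ->
  repaired_from_rest ls i -> repaired_from_rest ls j ->
  exists k m, [/\ uniq [:: i; j; k; m], repair31 (ls i) (ls j) (ls k) (ls m)
                & repair31 (ls j) (ls i) (ls k) (ls m)].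
Proof.
move=> ij ri rj; have ji : j != i by rewrite eq_sym.
have [k [m [u rij]]] := repaired_from_rest_with ij ri.
have [k' [m' [u' rji]]] := repaired_from_rest_with ji rj.
have km'E : (k' == k) && (m' == m) || (k' == m) && (m' == k).
  move: (mem_uniq_ord4 k' u) (mem_uniq_ord4 m' u) u'; rewrite !inE.
  by case/or4P=> /eqP-> /or4P[] /eqP->; rewrite /= !inE ?eqxx ?orbT ?andbF.
exists k, m; move: rji; case/orP: km'E => /andP[/eqP-> /eqP->] rji.
  by [].
by split=> //; apply: repair31_swapr.
Qed.

End Family.

Theorem mainTheorem5 (F : finFieldType) (ls : 'I_4 -> 'M[F]_(2,5)) :
  (forall i, is_line (ls i)) ->
  any_three_span ls ->
  pairwise_skew ls ->
  forall i j : 'I_4, repaired_from_rest ls i -> repaired_from_rest ls j -> i = j.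
Proof.
move=> lines span skew i j ri rj; case: (eqVneq i j) => // ij; exfalso.
have [k [m [u rij rji]]] := repaired_from_rest_pair ij ri rj.
have rank_ls l : \rank (ls l) = 2%N by apply/eqP/lines.
have span_ijk := span _ _ _ (subseq_uniq (prefix_subseq [:: i; j; k] [:: m]) u).
have span_ijm := span i j m
  (subseq_uniq (cat_subseq (subseq_refl [:: i; j]) (suffix_subseq [:: k] [:: m])) u).
exact: no_mutual_repair31 (rank_ls i) (rank_ls j) (skew _ _ ij) span_ijk span_ijm
  rij rji.
Qed.
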